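(* Let $\mathcal{B}$ and $\mathcal{A}_{i_1},\mathcal{A}_{i_1,i_2},\dots,\mathcal{A}_{i_1,\dots,i_m}$ (indices in $\{1,\dots,n\}$) be non-random Hermitian tensors of a common shape, and let $\beta_1,\dots,\beta_n$ be independent symmetric Bernoulli random variables, $\mathrm{Pr}(\beta_i=1)=\mathrm{Pr}(\beta_i=-1)=\frac12$. Then $$\mathrm{Pr}\Big(\Big\|\mathcal{B}+\sum_{j=1}^m\sum_{1\le i_1\neq i_2\neq\cdots\neq i_j\le n}\mathcal{A}_{i_1,\dots,i_j}\beta_{i_1}\cdots\beta_{i_j}\Big\|_{(k)}\ge\|\mathcal{B}\|_{(k)}\Big)\ge C_m,$$ where $C_m$ is a constant depending on $\mathcal{A}_{i_1},\mathcal{A}_{i_1,i_2},\dots,\mathcal{A}_{i_1,\dots,i_m}$ but independent of $\mathcal{B}$.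
   Context: Singular values of a tensor are those of its unfolded matrix (identify multi-indices with single indices by a fixed bijection); $\|\mathcal{T}\|_{(k)}$ is the Ky Fan $k$-norm, the sum of the $k$ largest singular values. The inner sum ranges over indices $i_1,\dots,i_j\in\{1,\dots,n\}$ that are pairwise distinct. *)

From mathcomp Require Import all_boot all_order all_algebra.
Set Implicit Arguments. Unset Strict Implicit. Unset Printing Implicit Defensive.
Import Order.TTheory GRing.Theory Num.Theory.
Local Open Scope ring_scope.

(* Scalars: any numeric algebraically closed field C (e.g. the complex numbers). *)

Definition midx (N : nat) (dims : 'I_N -> nat) : finType :=
  {dffun forall i : 'I_N, 'I_(dims i)}.

(* A (square) tensor of shape d_0 x ... x d_(N-1) x d_0 x ... x d_(N-1):
   an entry for each pair (row multi-index, column multi-index). *)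
Notation tensor C dims := {ffun midx dims * midx dims -> C}.

Definition hermitian_tensor (C : numClosedFieldType) N (dims : 'I_N -> nat)
  (T : tensor C dims) : Prop :=
  forall x y : midx dims, T (x, y) = (T (y, x))^*.

Definition unfold (C : nzRingType) N (dims : 'I_N -> nat) (T : tensor C dims)
  : 'M[C]_#|midx dims| :=
  \matrix_(i, j) T (enum_val i, enum_val j).

Definition eigenvalues (C : numClosedFieldType) n (M : 'M[C]_n) : seq C :=
  sval (closed_field_poly_normal (char_poly M)).

Definition singular_values (C : numClosedFieldType) n (M : 'M[C]_n) : seq C :=
  sort (fun x y : C => y <= x)
    [seq sqrtC z | z <- eigenvalues ((map_mx Num.conj M)^T *m M)].

Definition kyfan (C : numClosedFieldType) (k : nat) n (M : 'M[C]_n) : C :=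
  \sum_(s <- take k (singular_values M)) s.

Definition tkyfan (C : numClosedFieldType) (k : nat) N (dims : 'I_N -> nat)
  (T : tensor C dims) : C := kyfan k (unfold T).

Definition sgn (C : nzRingType) (b : bool) : C := (-1) ^+ b.

(* A j (for j : 'I_m) is the family of coefficients of degree j.+1. *)
Definition chaos (C : numClosedFieldType) N (dims : 'I_N -> nat) (n m : nat)
  (B : tensor C dims)
  (A : forall j : 'I_m, (j.+1).-tuple 'I_n -> tensor C dims)
  (beta : {ffun 'I_n -> bool}) : tensor C dims :=
  [ffun x => B x + \sum_(j < m) \sum_(t : (j.+1).-tuple 'I_n | uniq t)
        A j t x * \prod_(i <- t) sgn C (beta i)].

(* beta_1..beta_n independent symmetric Bernoulli = uniform distribution on
   {+-1}^n; probability of an event = (number of outcomes) / 2^n. *)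
Definition prob (C : numFieldType) n (E : pred {ffun 'I_n -> bool}) : C :=
  #|E|%:R / (2 ^ n)%:R.

From mathcomp Require Import all_boot all_order all_algebra.
From mathcomp Require Import sesquilinear spectral ring.
Set Implicit Arguments. Unset Strict Implicit. Unset Printing Implicit Defensive.
Import Order.TTheory GRing.Theory Num.Theory.
Local Open Scope ring_scope.
Local Open Scope sesquilinear_scope.

(* The Ky Fan k-norm of a normal matrix M is the maximum of Re tr (X M Y^* )
   over pairs of partial isometries X, Y of rank at most k, and for fixed X, Y
   this is a linear functional of M.  Every chaos term has mean zero over the
   2^n sign patterns, so the functional attaining ||B||_(k) has the same
   average over the patterns as its value at B; hence for some pattern beta
   ||chaos(beta)||_(k) >= Re tr (X chaos(beta) Y^* ) >= ||B||_(k), and the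
   probability is at least 2^-n, whatever B is. *)

Section SumLargest.
Variable R : numDomainType.

Lemma weighted_sum_le_threshold (I : eqType) (s1 s2 : seq I) (x c : I -> R) (t : R) :
  {in s1, forall i, t <= x i} -> {in s2, forall i, x i <= t} ->
  (forall i, 0 <= c i <= 1) ->
  \sum_(i <- s1 ++ s2) x i * c i <=
    \sum_(i <- s1) x i + t * (\sum_(i <- s1 ++ s2) c i - (size s1)%:R).
Proof.
move=> ge_t le_t c01.
have above : \sum_(i <- s1) x i * c i <= \sum_(i <- s1) (x i + t * c i - t).
  rewrite big_seq [leRHS]big_seq; apply: ler_sum => i s1i.
  have /andP[_ c1] := c01 i.
  rewrite -subr_ge0 (_ : _ - _ = (x i - t) * (1 - c i)); last by ring.
  by rewrite mulr_ge0 // subr_ge0 ?ge_t.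
have below : \sum_(i <- s2) x i * c i <= \sum_(i <- s2) t * c i.
  rewrite big_seq [leRHS]big_seq; apply: ler_sum => i s2i.
  by have /andP[c0 _] := c01 i; rewrite ler_wpM2r ?le_t.
suff -> : \sum_(i <- s1) x i + t * (\sum_(i <- s1 ++ s2) c i - (size s1)%:R) =
          \sum_(i <- s1) (x i + t * c i - t) + \sum_(i <- s2) t * c i.
  by rewrite big_cat lerD.
rewrite big_cat sumrB big_split /= -!mulr_sumr big_const_seq count_predT.
by rewrite iter_addr_0 -[t *+ _]mulr_natr; ring.
Qed.

Definition sum_largest (J : finType) k (x : J -> R) : R :=
  \sum_(i <- take k (sort (relpre x >=%R) (enum J))) x i.

Lemma weighted_sum_le_sum_largest (J : finType) k (x c : J -> R) :
  (forall i, 0 <= x i) -> (forall i, 0 <= c i <= 1) -> \sum_i c i <= k%:R ->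
  \sum_i x i * c i <= sum_largest k x.
Proof.
move=> x0 c01 ck; rewrite /sum_largest; set s := sort _ (enum J).
have total_x : total (relpre x >=%R).
  by move=> i j; apply: real_leVge; apply: ger0_real.
have trans_x : transitive (relpre x >=%R).
  by move=> i j l /= ji lj; apply: le_trans lj ji.
have : pairwise (relpre x >=%R) (take k s ++ drop k s).
  by rewrite cat_take_drop -sorted_pairwise // sort_sorted.
rewrite pairwise_cat => /and3P[/allrelP top_ge _ pw_drop].
have sum_s (F : J -> R) : \sum_i F i = \sum_(i <- take k s ++ drop k s) F i.
  have ps : perm_eq s (enum J) by rewrite perm_sort.
  by rewrite cat_take_drop (perm_big _ ps) big_enum.
rewrite !sum_s.
(* The threshold is the largest value left out of the top k. *)
case E : (drop k s) pw_drop top_ge => [|j s2'] /=.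
  move=> _ _; rewrite cats0 big_seq [leRHS]big_seq; apply: ler_sum => i _.
  by have /andP[_ c1] := c01 i; rewrite ler_piMr.
move=> /andP[/allP le_j _] top_ge.
apply: le_trans (weighted_sum_le_threshold (t := x j) _ _ c01) _.
- by move=> i ti; apply: top_ge; rewrite ?mem_head.
- by move=> i; rewrite inE => /predU1P[-> //|/le_j].
rewrite gerDl mulr_ge0_le0 // subr_le0 -E -sum_s size_takel //.
by rewrite ltnW // -subn_gt0 -size_drop E.
Qed.
End SumLargest.

Lemma char_poly_invmx_conj (R : fieldType) n (A P : 'M[R]_n) : P \in unitmx ->
  char_poly (invmx P *m A *m P) = char_poly A.
Proof.
move=> Pu; rewrite /char_poly /char_poly_mx.
set f := map_mx (@polyC R).
have -> : f (invmx P *m A *m P) = f (invmx P) *m f A *m f P by rewrite /f !map_mxM.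
have hX : ('X%:M : 'M[{poly R}]_n) = f (invmx P) *m 'X%:M *m f P.
  by rewrite mul_mx_scalar -scalemxAl -map_mxM mulVmx // map_mx1 scalemx1.
rewrite [X in X - _]hX -mulmxBl -mulmxBr !det_mulmx mulrAC -det_mulmx.
by rewrite /f -map_mxM mulVmx // map_mx1 det1 mul1r.
Qed.

Section Phase.
Variable C : numClosedFieldType.

(* [phase 0] is [1], not [0], so that the phase is always unimodular. *)
Definition phase (z : C) : C := if z == 0 then 1 else z / `|z|.

Lemma phase_unit (z : C) : (phase z)^* * phase z = 1.
Proof.
rewrite /phase; case: eqP => [_|/eqP z0]; first by rewrite rmorph1 mulr1.
by rewrite -normCKC normrM normfV normr_id mulfV ?expr1n ?normr_eq0.
Qed.

Lemma mul_conj_phase (z : C) : z * (phase z)^* = `|z|.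
Proof.
rewrite /phase; case: eqP => [->|/eqP z0]; first by rewrite mul0r normr0.
rewrite rmorphM fmorphV /= (conj_Creal (normr_real _)) mulrA -normCK expr2.
by rewrite mulfK ?normr_eq0.
Qed.

End Phase.

Section PartialIsometry.
Variables (C : numClosedFieldType) (n : nat).

Definition partial_isometry_le k (X : 'M[C]_n) :=
  (X^t* *m X) *m (X^t* *m X) = X^t* *m X /\ \tr (X^t* *m X) <= k%:R.

Lemma gram_mxE (X : 'M[C]_n) i j : (X^t* *m X) i j = \sum_l (X l i)^* * X l j.
Proof. by rewrite !mxE; apply: eq_bigr => l _; rewrite !mxE. Qed.

Lemma gram_mx_diag (X : 'M[C]_n) i : (X^t* *m X) i i = \sum_l `|X l i| ^+ 2.
Proof. by rewrite gram_mxE; apply: eq_bigr => l _; rewrite normCKC. Qed.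

Lemma gram_mx_adj (X : 'M[C]_n) i j : (X^t* *m X) j i = ((X^t* *m X) i j)^*.
Proof.
rewrite !gram_mxE rmorph_sum; apply: eq_bigr => l _.
by rewrite rmorphM /= conjCK mulrC.
Qed.

(* G := X^* X is idempotent and self-adjoint, so G_ii = sum_j |G_ij|^2 >= G_ii^2. *)
Lemma partial_isometry_col_norm_le1 k (X : 'M[C]_n) i :
  partial_isometry_le k X -> \sum_l `|X l i| ^+ 2 <= 1.
Proof.
move=> [idemG _]; set G := X^t* *m X in idemG.
rewrite -gram_mx_diag -/G; set w := G i i.
have w0 : 0 <= w by rewrite /w gram_mx_diag sumr_ge0 // => l _; rewrite exprn_ge0.
have w_sum : w = \sum_j `|G i j| ^+ 2.
  rewrite /w -{1}idemG mxE; apply: eq_bigr => j _.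
  by rewrite /G (gram_mx_adj X i j) normCK.
have w2_le : w ^+ 2 <= w.
  rewrite {2}w_sum (bigD1 i) //= -/w ger0_norm // lerDl.
  by apply: sumr_ge0 => j _; rewrite exprn_ge0.
have [-> |wn0] := eqVneq w 0; first exact: ler01.
by rewrite -(ler_pM2l (_ : 0 < w)) ?mulr1 -?expr2 // lt_def wn0.
Qed.

Lemma partial_isometry_norm_le k (X : 'M[C]_n) :
  partial_isometry_le k X -> \sum_i \sum_l `|X l i| ^+ 2 <= k%:R.
Proof.
by case=> _; rewrite /mxtrace; under eq_bigr do rewrite gram_mx_diag.
Qed.

Lemma partial_isometry_mulmx_unitary k (X P : 'M[C]_n) : P \is unitarymx ->
  partial_isometry_le k X -> partial_isometry_le k (X *m P^t*).
Proof.
move=> /unitarymxP /mulmx1C PtP [idemG trG]; rewrite /partial_isometry_le.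
have -> : (X *m P^t*)^t* *m (X *m P^t*) = P *m (X^t* *m X) *m P^t*.
  by rewrite trmx_mul map_mxM trmxCK !mulmxA.
move: idemG trG; set G := X^t* *m X; clearbody G => idemG trG; split.
  by rewrite !mulmxA -[P *m G *m P^t* *m P]mulmxA PtP mulmx1 -[P *m G *m G]mulmxA idemG.
by rewrite mxtrace_mulC mulmxA PtP mul1mx.
Qed.

Lemma partial_isometry_diag_unitary k (r : seq 'I_n) (w : 'rV[C]_n) (P : 'M[C]_n) :
  uniq r -> (size r <= k)%N -> P \is unitarymx ->
  (forall i, (w 0 i)^* * w 0 i = (i \in r)%:R) ->
  partial_isometry_le k (diag_mx w *m P).
Proof.
move=> r_uniq r_size P_unitary w_ind; have PPt := unitarymxP P_unitary.
set e : 'rV[C]_n := \row_i (i \in r)%:R; rewrite /partial_isometry_le.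
have -> : (diag_mx w *m P)^t* *m (diag_mx w *m P) = P^t* *m diag_mx e *m P.
  rewrite trmx_mul map_mxM tr_diag_mx map_diag_mx !mulmxA.
  rewrite -(mulmxA _ (diag_mx _) (diag_mx w)) mulmx_diag.
  by congr (_ *m diag_mx _ *m _); apply/rowP => i; rewrite !mxE w_ind.
split.
  rewrite !mulmxA -[P^t* *m diag_mx e *m P *m P^t*]mulmxA PPt mulmx1.
  rewrite -[P^t* *m diag_mx e *m diag_mx e]mulmxA mulmx_diag.
  congr (_ *m diag_mx _ *m _); apply/rowP => i; rewrite !mxE.
  by case: (i \in r); rewrite ?mulr1 ?mulr0.
rewrite mxtrace_mulC mulmxA PPt mul1mx mxtrace_diag.
rewrite (eq_bigr (fun i => if i \in r then 1 else 0)); last first.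
  by move=> i _; rewrite mxE; case: (i \in r).
by rewrite -big_mkcond /= sumr_const (card_uniqP r_uniq) ler_nat.
Qed.

Lemma mxtrace_mul_diag_adj (X Y : 'M[C]_n) (d : 'rV[C]_n) :
  \tr (X *m diag_mx d *m Y^t*) = \sum_i d 0 i * \sum_j X j i * (Y j i)^*.
Proof.
rewrite mul_mx_diag /mxtrace; under eq_bigr do rewrite mxE.
rewrite exchange_big /=; apply: eq_bigr => i _; rewrite mulr_sumr.
by apply: eq_bigr => j _; rewrite !mxE; ring.
Qed.

End PartialIsometry.

Lemma normalmx_unitary_diag (C : numClosedFieldType) n (M : 'M[C]_n) :
  M \is normalmx ->
  M = (spectralmx M)^t* *m diag_mx (spectral_diag M) *m spectralmx M.
Proof.
move=> /orthomx_spectralP {1}->.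
by rewrite invmx_unitary // spectral_unitarymx.
Qed.

Section UnitarilyDiagonal.
Variables (C : numClosedFieldType) (n : nat) (M P : 'M[C]_n) (d : 'rV[C]_n).
Hypotheses (P_unitary : P \is unitarymx) (M_diag : M = P^t* *m diag_mx d *m P).

Lemma eigenvalues_gram_unitary_diag :
  perm_eq (eigenvalues ((map_mx Num.conj M)^T *m M)) [seq `|d 0 i| ^+ 2 | i <- enum 'I_n].
Proof.
have -> : (map_mx Num.conj M)^T *m M =
    invmx P *m (diag_mx (map_mx Num.conj d) *m diag_mx d) *m P.
  rewrite invmx_unitary // M_diag map_trmx !trmx_mul !map_mxM trmxCK.
  by rewrite tr_diag_mx map_diag_mx !mulmxA mulmxtVK.
rewrite /eigenvalues; case: closed_field_poly_normal => r /=.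
rewrite char_poly_invmx_conj ?unitarymx_unit // mulmx_diag.
rewrite (monicP (char_poly_monic _)) scale1r char_poly_trig ?diag_mx_is_trig //.
move=> r_roots; apply: prod_XsubC_eq; rewrite -r_roots big_map big_enum /=.
by apply: eq_bigr => i _; rewrite !mxE eqxx mulr1n normCKC.
Qed.

Lemma kyfan_unitary_diag k : kyfan k M = sum_largest k (fun i => `|d 0 i|).
Proof.
rewrite /kyfan /singular_values /sum_largest.
set sv := map _ _.
have sv_perm : perm_eq sv [seq `|d 0 i| | i <- enum 'I_n].
  apply: perm_trans (perm_map _ eigenvalues_gram_unitary_diag) _.
  by rewrite -map_comp (eq_map (g := fun i => `|d 0 i|)) // => i /=; rewrite sqrCK.
have -> : sort (fun x y : C => y <= x) sv = sort >=%R [seq `|d 0 i| | i <- enum 'I_n].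
  apply/perm_sort_inP => //.
  - move=> a b; rewrite !(perm_mem sv_perm) => /mapP[i _ ->] /mapP[j _ ->].
    by apply: real_leVge; apply: normr_real.
  - by move=> a b c _ _ _ ba cb; apply: le_trans cb ba.
  - by move=> a b _ _ /andP[ba ab]; apply/le_anti; rewrite ab ba.
by rewrite sort_map -map_take big_map.
Qed.

(* With a := X P^* and b := Y P^*, the weights c_i = (|a_i|^2 + |b_i|^2) / 2
   of the columns lie in [0, 1] and sum to at most k, and
   |sum_j a_ji (b_ji)^*| <= c_i by AM-GM. *)
Lemma Re_trace_le_kyfan k (X Y : 'M[C]_n) :
  partial_isometry_le k X -> partial_isometry_le k Y ->
  'Re (\tr (X *m M *m Y^t*)) <= kyfan k M.
Proof.
move=> /(partial_isometry_mulmx_unitary P_unitary) pa.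
move=> /(partial_isometry_mulmx_unitary P_unitary) pb.
have -> : X *m M *m Y^t* = (X *m P^t*) *m diag_mx d *m (Y *m P^t*)^t*.
  by rewrite M_diag trmx_mul map_mxM trmxCK !mulmxA.
move: (X *m P^t*) (Y *m P^t*) pa pb => a b pa pb.
rewrite kyfan_unitary_diag mxtrace_mul_diag_adj.
pose c i := (\sum_l `|a l i| ^+ 2 + \sum_l `|b l i| ^+ 2) / 2.
have c01 i : 0 <= c i <= 1.
  rewrite divr_ge0 ?addr_ge0 ?sumr_ge0 //= => [|l _|l _]; rewrite ?exprn_ge0 //.
  rewrite ler_pdivrMr // mul1r (_ : 2 = 1 + 1) //.
  by rewrite lerD ?(partial_isometry_col_norm_le1 _ pa, partial_isometry_col_norm_le1 _ pb).
have ck : \sum_i c i <= k%:R.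
  rewrite -mulr_suml ler_pdivrMr // big_split /= -mulr_natr mulr2n mulrDr mulr1.
  by rewrite !mul1r lerD ?(partial_isometry_norm_le pa, partial_isometry_norm_le pb).
apply: le_trans (weighted_sum_le_sum_largest _ c01 ck); last by [].
apply: le_trans (leif_Re_Creal _).1 _; apply: le_trans (ler_norm_sum _ _ _) _.
apply: ler_sum => i _; rewrite normrM ler_wpM2l //.
apply: le_trans (ler_norm_sum _ _ _) _.
rewrite /c -big_split /= mulr_suml; apply: ler_sum => j _.
rewrite normrM norm_conjC.
exact: (real_leif_mean_square (normr_real _) (normr_real _)).1.
Qed.

Lemma kyfan_attained k : exists X Y : 'M[C]_n,
  [/\ partial_isometry_le k X, partial_isometry_le k Y &
      kyfan k M = 'Re (\tr (X *m M *m Y^t*))].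
Proof.
rewrite kyfan_unitary_diag /sum_largest.
set r := take k _.
have r_uniq : uniq r by rewrite take_uniq // sort_uniq enum_uniq.
have r_size : (size r <= k)%N by rewrite size_take_min geq_minl.
pose u : 'rV[C]_n := \row_i (i \in r)%:R.
pose v : 'rV[C]_n := \row_i ((i \in r)%:R * phase (d 0 i)).
exists (diag_mx u *m P), (diag_mx v *m P); split.
- apply: (partial_isometry_diag_unitary r_uniq) => // i.
  by rewrite mxE rmorph_nat; case: (i \in r); rewrite ?mulr1 ?mulr0.
- apply: (partial_isometry_diag_unitary r_uniq) => // i.
  rewrite mxE rmorphM rmorph_nat mulrACA phase_unit mulr1.
  by case: (i \in r); rewrite ?mulr1 ?mulr0.
have -> : diag_mx u *m P *m M *m (diag_mx v *m P)^t* =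
    diag_mx u *m diag_mx d *m diag_mx (map_mx Num.conj v).
  rewrite M_diag trmx_mul map_mxM tr_diag_mx map_diag_mx !mulmxA.
  by rewrite -(mulmxA _ P) (unitarymxP P_unitary) mulmx1 mulmxtVK.
rewrite !mulmx_diag mxtrace_diag raddf_sum (big_uniq _ r_uniq) big_mkcond /=.
apply: eq_bigr => i _; rewrite !mxE rmorphM rmorph_nat.
case: (i \in r); rewrite ?mul0r ?mulr0 ?raddf0 // !mul1r mul_conj_phase.
by apply/esym/Creal_ReP/normr_real.
Qed.

End UnitarilyDiagonal.

Lemma exists_ge_of_sum_eq (R : numDomainType) (I : finType) (i0 : I) (f : I -> R) a :
  a \is Num.real -> (forall i, f i \is Num.real) ->
  \sum_i f i = \sum_(i : I) a -> exists i, a <= f i.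
Proof.
move=> a_real f_real sum_eq.
have [/existsP //|/existsPn f_lt] := boolP [exists i, a <= f i].
have : \sum_i f i < \sum_(i : I) a.
  apply: ltr_sum => [|i _]; last by rewrite real_ltNge ?f_lt.
  by apply/hasP; exists i0; rewrite ?mem_index_enum.
by rewrite sum_eq ltxx.
Qed.

Lemma sum_prod_sgn_uniq (R : numDomainType) (I : finType) (s : seq I) :
  uniq s -> s != [::] ->
  \sum_(beta : {ffun I -> bool}) \prod_(i <- s) sgn R (beta i) = 0.
Proof.
case: s => [|i0 s] //= /andP[i0_s _] _.
(* Flipping the sign at the first index is an involution on the outcomes
   that negates every term. *)
pose flip (beta : {ffun I -> bool}) := [ffun i => (i == i0) (+) beta i].
have flipK : involutive flip.
  by move=> beta; apply/ffunP => i; rewrite !ffunE addbA addbb.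
set S := \sum_beta _.
have : S = - S.
  rewrite {1}/S (reindex_inj (inv_inj flipK)) /= -sumrN.
  apply: eq_bigr => beta _; rewrite !big_cons ffunE eqxx /sgn /= signrN mulNr.
  congr (- (_ * _)); rewrite big_seq [RHS]big_seq; apply: eq_bigr => i si.
  by rewrite ffunE (_ : (i == i0) = false) //; apply: contraNF i0_s => /eqP <-.
by move/eqP; rewrite -addr_eq0 -mulr2n mulrn_eq0 /= => /eqP.
Qed.

Section Tensors.
Variables (C : numClosedFieldType) (N : nat) (dims : 'I_N -> nat).

Lemma unfold_hermitian (T : tensor C dims) :
  hermitian_tensor T -> unfold T \is hermsymmx.
Proof.
move=> T_herm; rewrite qualifE expr0 scale1r; apply/eqP/matrixP => i j.
by rewrite !mxE T_herm.
Qed.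

Lemma chaos_hermitian n m (B : tensor C dims)
    (A : forall j : 'I_m, (j.+1).-tuple 'I_n -> tensor C dims) beta :
  hermitian_tensor B -> (forall j t, hermitian_tensor (A j t)) ->
  hermitian_tensor (chaos B A beta).
Proof.
move=> B_herm A_herm x y; rewrite !ffunE rmorphD /= -B_herm rmorph_sum.
congr (_ + _); apply: eq_bigr => j _; rewrite rmorph_sum; apply: eq_bigr => t _.
rewrite rmorphM /= -A_herm rmorph_prod; congr (_ * _).
by apply: eq_bigr => i _; rewrite /sgn rmorphXn rmorphN1.
Qed.

Lemma sum_unfold_chaos n m (B : tensor C dims)
    (A : forall j : 'I_m, (j.+1).-tuple 'I_n -> tensor C dims) :
  \sum_beta unfold (chaos B A beta) = \sum_(beta : {ffun 'I_n -> bool}) unfold B.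
Proof.
apply/matrixP => p q; rewrite !summxE; under eq_bigr do rewrite !mxE ffunE.
under [RHS]eq_bigr do rewrite mxE.
rewrite big_split /= [X in _ + X]exchange_big [X in _ + X]big1 ?addr0 // => j _.
rewrite exchange_big big1 // => t t_uniq.
by rewrite -mulr_sumr sum_prod_sgn_uniq ?mulr0 // -size_eq0 size_tuple.
Qed.

End Tensors.

Theorem lemma6 (C : numClosedFieldType) (N : nat) (dims : 'I_N -> nat)
  (n m k : nat)
  (A : forall j : 'I_m, (j.+1).-tuple 'I_n -> tensor C dims)
  (hA : forall (j : 'I_m) (t : (j.+1).-tuple 'I_n), hermitian_tensor (A j t)) :
  exists c : C, 0 < c /\
    forall B : tensor C dims, hermitian_tensor B ->
      c <= prob C [pred beta | tkyfan k B <= tkyfan k (chaos B A beta)].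
Proof.
exists (1 / (2 ^ n)%:R); split; first by rewrite divr_gt0 ?ltr0n ?expn_gt0.
move=> B B_herm.
have diag_B := normalmx_unitary_diag (hermitian_normalmx (unfold_hermitian B_herm)).
have [X [Y [pX pY kyfan_B]]] := kyfan_attained (spectral_unitarymx _) diag_B k.
pose G (T : tensor C dims) := 'Re (\tr (X *m unfold T *m Y^t*)).
have sum_G (T : {ffun 'I_n -> bool} -> tensor C dims) :
    \sum_beta G (T beta) = 'Re (\tr (X *m (\sum_beta unfold (T beta)) *m Y^t*)).
  by rewrite mulmx_sumr mulmx_suml (raddf_sum (@mxtrace _ _)) raddf_sum.
have [beta G_le] : exists beta, G B <= G (chaos B A beta).
  apply: (exists_ge_of_sum_eq [ffun=> false]) => [|beta|]; rewrite ?Creal_Re //.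
  by rewrite (sum_G (chaos B A)) (sum_G (fun=> B)) sum_unfold_chaos.
have diag_chaos := normalmx_unitary_diag
  (hermitian_normalmx (unfold_hermitian (chaos_hermitian beta B_herm hA))).
have le_beta : tkyfan k B <= tkyfan k (chaos B A beta).
  rewrite /tkyfan kyfan_B (le_trans G_le) // /G.
  exact: (Re_trace_le_kyfan (spectral_unitarymx _) diag_chaos pX pY).
rewrite /prob ler_wpM2r ?invr_ge0 ?ler0n // ler1n.
by apply/card_gt0P; exists beta; rewrite inE.
Qed.
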